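(* Let $\mathbf{w}\in\Sigma^\omega$ be an infinite word with appearance constant $\mathbf{A}_\mathbf{w}<\infty$. For all integers $n,s\ge1$, there is a string attractor of $\mathbf{w}[0..n-1]$ for lengths $[s..2s]$ having size at most $2\mathbf{A}_\mathbf{w}$.
   Context: $\Sigma$ is a finite alphabet; words are indexed from $0$ and $[a..b]=\{a,a+1,\ldots,b\}$. The appearance constant $\mathbf{A}_\mathbf{w}$ is the least constant $C$ (if any) such that for every $m\ge1$, every length-$m$ factor of $\mathbf{w}$ has an occurrence in the prefix of $\mathbf{w}$ of length at most $Cm$. Given a word $x$ and a set $L\subseteq\mathbb{N}$, a string attractor of $x$ for lengths $L$ is a set of integers $S$ such that for every nonzero $\ell\in L$, every length-$\ell$ factor of $x$ has some occurrence in $x$ containing (crossing) an index in $S$. *)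

From HB Require Import structures.
From mathcomp Require Import all_boot all_order all_algebra.
From mathcomp Require Import reals.
Set Implicit Arguments. Unset Strict Implicit. Unset Printing Implicit Defensive.
Import Order.TTheory GRing.Theory Num.Theory.

(* Words are indexed from 0. An infinite word over Sigma is a map nat -> Sigma. *)

Definition factor (T : Type) (x : seq T) (i l : nat) : seq T := take l (drop i x).

Definition word_prefix (T : Type) (w : nat -> T) (n : nat) : seq T := mkseq w n.

Definition string_attractor (T : eqType) (x : seq T) (L : pred nat) (S : seq int) : Prop :=
  forall l, L l -> 0 < l ->
  forall i, i + l <= size x ->
  exists j, [/\ j + l <= size x, factor x j l = factor x i l &
    exists2 p, p \in S & ((Posz j <= p) && (p <= Posz (j + l) - 1))%R].

Definition appearance_bound (R : realType) (T : Type) (w : nat -> T) (C : R) : Prop :=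
  forall m, 0 < m -> forall i, exists j,
    (forall t, t < m -> w (j + t) = w (i + t)) /\ ((j + m)%:R <= C * m%:R)%R.

(* C is the appearance constant A_w (the least such bound; A_w < oo means it exists). *)
Definition appearance_constant (R : realType) (T : Type) (w : nat -> T) (C : R) : Prop :=
  appearance_bound w C /\ (forall C', appearance_bound w C' -> (C <= C')%R).

From HB Require Import structures.
From mathcomp Require Import all_boot all_order all_algebra.
From mathcomp Require Import reals.
From mathcomp Require Import zify.
Import Order.TTheory GRing.Theory Num.Theory.

(* A factor of length l in [s..2s] has an occurrence ending before A l <= 2 A s,
   and every window of length at least s contains a position k s - 1 with k >= 1.
   Such a window ending before 2 A s forces k <= 2 A, so the positions k s - 1,
   1 <= k <= 2 A, form the attractor. *)

Lemma factor_word_prefix (T : Type) (w : nat -> T) n j l :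
  j + l <= n -> factor (word_prefix w n) j l = mkseq (fun t => w (j + t)) l.
Proof.
move=> jl_le_n; have x0 : T := w 0.
apply: (@eq_from_nth _ x0) => [|t].
  by rewrite size_take size_drop !size_mkseq; apply/minn_idPl; lia.
rewrite size_take size_drop size_mkseq => t_lt.
have t_lt_l : t < l by move: t_lt; rewrite /minn; case: ifP; lia.
by rewrite nth_take // nth_drop !nth_mkseq //; lia.
Qed.

Section AppearanceBound.

Context {R : realType} {T : Type} {w : nat -> T} {C : R}.
Hypothesis bound : appearance_bound w C.

Lemma appearance_bound_ge1 : (1 <= C)%R.
Proof.
have [j [_ j_le]] := bound 1 isT 0.
by rewrite mulr1 in j_le; apply: le_trans j_le; rewrite ler1n addn1.
Qed.

Lemma appearance_bound_prefix_occurrence {n l i} :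
  0 < l -> i + l <= n ->
  exists j, [/\ j + l <= n,
    factor (word_prefix w n) j l = factor (word_prefix w n) i l
  & ((j + l)%:R <= C * l%:R)%R].
Proof.
move=> l_gt0 il_le_n; have [j [wji jl_le]] := bound l l_gt0 i.
have [j_le_i | i_lt_j] := leqP j i; last first.
  by exists i; split=> //; apply: le_trans jl_le; rewrite ler_nat; lia.
exists j; split=> //; first lia.
rewrite !factor_word_prefix //; last lia.
by apply/eq_in_map => t; rewrite mem_iota add0n => /wji.
Qed.

End AppearanceBound.

Definition pred_multiples (s K : nat) : seq int :=
  [seq (k * s)%:Z - 1 | k <- iota 1 K]%R.

Lemma size_pred_multiples s K : size (pred_multiples s K) = K.
Proof. by rewrite size_map size_iota. Qed.

Lemma pred_multiples_uniq s K : 0 < s -> uniq (pred_multiples s K).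
Proof.
move=> s_gt0; rewrite map_inj_in_uniq ?iota_uniq // => a b _ _ /eqP.
by rewrite (can_eq (addrK _)) eqz_nat eqn_pmul2r // => /eqP.
Qed.

Lemma mem_pred_multiples s K k :
  0 < k <= K -> ((k * s)%:Z - 1)%R \in pred_multiples s K.
Proof. by move=> k_bounds; apply: map_f; rewrite mem_iota; lia. Qed.

Lemma multiple_in_window {s l} j :
  0 < s -> s <= l -> exists k, [/\ 0 < k, j < k * s & k * s <= j + l].
Proof.
move=> s_gt0 s_le_l; exists (j %/ s).+1; split=> //; first exact: ltn_ceil.
by rewrite mulSn addnC leq_add ?leq_divM.
Qed.

Theorem lemma14 (R : realType) (Sigma : finType) (w : nat -> Sigma) (A : R) :
  appearance_constant w A ->
  forall n s : nat, 1 <= n -> 1 <= s ->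
  exists S : seq int,
    [/\ uniq S,
        string_attractor (word_prefix w n) (fun l => (s <= l) && (l <= 2 * s)) S
      & ((size S)%:R <= 2 * A)%R].
Proof.
move=> [bound _] n s _ s_gt0.
have A_ge0 : (0 <= A)%R := le_trans ler01 (appearance_bound_ge1 bound).
exists (pred_multiples s (Num.truncn (2 * A))); split.
- exact: pred_multiples_uniq.
- move=> l /andP[s_le_l l_le_2s] l_gt0 i; rewrite size_mkseq => il_le_n.
  have [j [jl_le_n fj jl_le_Al]] :=
    appearance_bound_prefix_occurrence bound l_gt0 il_le_n.
  exists j; split; rewrite ?size_mkseq //.
  have [k [k_gt0 j_lt_ks ks_le_jl]] := multiple_in_window j s_gt0 s_le_l.
  have ks_le_2As : ((k * s)%:R <= 2 * A * s%:R)%R.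
    apply: (@le_trans _ _ (A * l%:R)%R).
      by apply: le_trans jl_le_Al; rewrite ler_nat.
    by rewrite [(2 * A)%R]mulrC -mulrA ler_wpM2l // -natrM ler_nat.
  exists ((k * s)%:Z - 1)%R; last by apply/andP; split; lia.
  apply: mem_pred_multiples; rewrite k_gt0 -(prednK k_gt0) truncn_gt_nat prednK //.
  by rewrite -(ler_pM2r (_ : 0 < s%:R)%R) ?ltr0n // -natrM.
- by rewrite size_pred_multiples truncn_le mulr_ge0.
Qed.
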